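(* Let $(M,d)$ be a bounded hyperconvex metric space and let $T: M\to M$ be a mapping which diminishes the radius of invariant admissible subsets of $M$. Then $T$ has a fixed point, and the fixed point set $F(T)=\{x\in M: Tx=x\}$ (with the induced metric) is hyperconvex.
   Context: A metric space $(M,d)$ is hyperconvex if for every family of closed balls $\{B(x_i,r_i)\}_{i\in I}$ in $M$ with $d(x_i,x_j)\le r_i+r_j$ for all $i,j\in I$, one has $\bigcap_{i\in I}B(x_i,r_i)\neq\emptyset$. For $x\in M$ and $K\subseteq M$, $r_x(K)=\sup\{d(x,y):y\in K\}$. A bounded subset $K\subseteq M$ is admissible if it equals the intersection of all closed balls of $M$ containing it. $T$ diminishes the radius of invariant admissible subsets if for every admissible $A\subseteq M$ with $T(A)\subseteq A$, $r_{Tx}(T(A))\le r_x(A)$ for every $x\in M$. *)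

From HB Require Import structures.
From mathcomp Require Import all_boot all_order all_algebra.
From mathcomp Require Import all_classical all_reals.
Set Implicit Arguments. Unset Strict Implicit. Unset Printing Implicit Defensive.
Import Order.TTheory GRing.Theory Num.Theory.
Local Open Scope classical_set_scope.
Local Open Scope ring_scope.

Section Metric.
Variables (R : realType) (M : Type) (d : M -> M -> R).

Definition is_metric : Prop :=
  [/\ forall x y, 0 <= d x y,
      forall x y, d x y = 0 <-> x = y,
      forall x y, d x y = d y x &
      forall x y z, d x z <= d x y + d y z].

Definition cball (c : M) (r : R) : set M := [set y | d c y <= r].

Definition bounded_space : Prop := exists C : R, forall x y, d x y <= C.

Definition bounded_subset (K : set M) : Prop :=
  exists C : R, forall x y, K x -> K y -> d x y <= C.

Definition hyperconvex_on (A : set M) : Prop :=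
  forall (I : Type) (x : I -> M) (r : I -> R),
    (forall i, A (x i)) ->
    (forall i j, d (x i) (x j) <= r i + r j) ->
    exists2 z, A z & forall i, d (x i) z <= r i.

Definition hyperconvex : Prop := hyperconvex_on setT.

Definition rad (x : M) (K : set M) : R := sup [set d x y | y in K].

Definition admissible (K : set M) : Prop :=
  bounded_subset K /\
  K = [set y | forall (c : M) (r : R), 0 <= r -> K `<=` cball c r -> cball c r y].

Definition diminishes_radius (T : M -> M) : Prop :=
  forall A : set M, admissible A -> T @` A `<=` A ->
    forall x : M, rad (T x) (T @` A) <= rad x A.

Definition fixed_points (T : M -> M) : set M := [set x | T x = x].

End Metric.

From Pilot Require Import Defs.
From HB Require Import structures.
From mathcomp Require Import all_boot all_order all_algebra.
From mathcomp Require Import all_classical all_reals.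
From mathcomp Require Import lra.
Set Implicit Arguments. Unset Strict Implicit. Unset Printing Implicit Defensive.
Import Order.TTheory GRing.Theory Num.Theory.
Local Open Scope classical_set_scope.
Local Open Scope ring_scope.

(* Every nonempty T-invariant admissible set A contains a minimal one K, by
   Zorn's lemma: the intersection of a chain of nonempty admissible sets is
   nonempty because the balls containing its members pairwise intersect.
   Minimality makes K the ball hull of T(K).  As T does not increase radii, the
   points of K within diam(K)/2 of all of K, which exist by hyperconvexity,
   form again an invariant admissible set, hence all of K; so diam(K) = 0 and K
   is a fixed point.  Taking A = {p} shows that T does not increase distances
   to a fixed point p, so an intersection of balls about fixed points is
   invariant and therefore contains a fixed point: this is the hyperconvexity
   of the fixed point set. *)

Lemma Zorn_bigcap (T : Type) (P : set (set T)) (A0 : set T) : P A0 ->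
    (forall F : set (set T), F `<=` P -> F !=set0 -> total_on F subset ->
      P (\bigcap_(X in F) X)) ->
  exists A, [/\ A `<=` A0, P A & forall B, P B -> B `<=` A -> A `<=` B].
Proof.
move=> PA0 Pcap.
have [|B [PB Bmax]] := @Zorn_bigcup T (fun B : set T => P (A0 `&` ~` B)).
  move=> F FP Ftot; have [->|/set0P [X0 FX0]] := eqVneq F set0.
    by rewrite bigcup_set0 setC0 setIT.
  suff -> : A0 `&` ~` (\bigcup_(X in F) X) =
            \bigcap_(K in [set A0 `&` ~` X | X in F]) K.
    apply: Pcap; first by move=> _ [X FX <-]; exact: FP.
      by exists (A0 `&` ~` X0), X0.
    move=> _ _ [X FX <-] [Y FY <-].
    by case: (Ftot X Y FX FY) => [XY|YX]; [right|left]; apply: setIS; apply: subsetC.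
  apply/seteqP; split=> y.
    by move=> [A0y nUy] _ [X FX <-]; split=> // Xy; apply: nUy; exists X.
  move=> capy; have [A0y _] := capy _ (ex_intro2 _ _ X0 FX0 erefl).
  split=> // -[X FX Xy]; by have [_] := capy _ (ex_intro2 _ _ X FX erefl).
exists (A0 `&` ~` B); split=> [y []//|//|B' PB' B'A y Ay].
apply: contrapT => nB'y.
have BB' : B `<` ~` B'.
  split=> [z Bz B'z|BB']; first by have [_] := B'A z B'z.
  by have [_] := Ay; apply; exact: BB'.
apply: Bmax BB' _; rewrite setCK setIidr //.
by apply: subset_trans B'A _ => z [].
Qed.

Section HyperconvexSpace.
Variables (R : realType) (M : Type) (d : M -> M -> R).
Hypotheses (dm : is_metric d) (dbounded : bounded_space d).

Lemma dist_ge0 x y : 0 <= d x y. Proof. by case: dm. Qed.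

Lemma dist0 x : d x x = 0. Proof. by case: dm => _ dE _ _; apply/dE. Qed.

Lemma distC x y : d x y = d y x. Proof. by case: dm. Qed.

Lemma dist_triangle x y z : d x z <= d x y + d y z. Proof. by case: dm. Qed.

Lemma cball0 c : cball d c 0 = [set c].
Proof.
case: dm => _ dE _ _; apply/seteqP; split=> y /=.
  by rewrite /cball /= => dcy; apply/esym/dE/eqP; rewrite eq_le dcy dist_ge0.
by move=> ->; rewrite /cball /= dist0.
Qed.

Lemma cball_common_le x c1 c2 r1 r2 :
  cball d c1 r1 x -> cball d c2 r2 x -> d c1 c2 <= r1 + r2.
Proof.
move=> c1x c2x; apply: le_trans (dist_triangle c1 x c2) _.
by rewrite (distC x); exact: lerD.
Qed.

Definition diam (K : set M) : R := sup [set d x y | x in K & y in K].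

Lemma dist_le_diam (K : set M) x y : K x -> K y -> d x y <= diam K.
Proof.
have [C dC] := dbounded; move=> Kx Ky; apply: sup_upper_bound.
  by split; [exists (d x y); exists x => //; exists y|exists C => _ [u _ [v _ <-]]].
by exists x => //; exists y.
Qed.

Lemma diam_le (K : set M) r : K !=set0 ->
  (forall x y, K x -> K y -> d x y <= r) -> diam K <= r.
Proof.
move=> [k Kk] Kr; apply: ge_sup => [|_ [x Kx [y Ky <-]]]; last exact: Kr.
by exists (d k k); exists k => //; exists k.
Qed.

Lemma dist_le_rad (K : set M) x y : K y -> d x y <= Defs.rad d x K.
Proof.
have [C dC] := dbounded; move=> Ky; apply: sup_upper_bound; last by exists y.
by split; [exists (d x y); exists y|exists C => _ [v _ <-]].
Qed.

Lemma rad_le (K : set M) x r : K !=set0 ->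
  (forall y, K y -> d x y <= r) -> Defs.rad d x K <= r.
Proof.
move=> [y Ky] Kr; apply: ge_sup => [|_ [v Kv <-]]; last exact: Kr.
by exists (d x y); exists y.
Qed.

Lemma rad_set1 x c : Defs.rad d x [set c] = d x c.
Proof. by rewrite /Defs.rad image_set1 sup1. Qed.

Definition ball_hull (K : set M) : set M :=
  [set y | forall c r, 0 <= r -> K `<=` cball d c r -> cball d c r y].

Lemma sub_ball_hull K : K `<=` ball_hull K.
Proof. by move=> y Ky c r _; apply. Qed.

Lemma ball_hullS K K' : K `<=` K' -> ball_hull K `<=` ball_hull K'.
Proof. by move=> KK' y hy c r r0 K'c; apply: hy => //; exact: subset_trans K'c. Qed.

Lemma admissibleP K : admissible d K <-> ball_hull K `<=` K.
Proof.
have [C dC] := dbounded; split=> [[_ {2}->] //|hK].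
split; first by exists C.
by apply/seteqP; split; [exact: sub_ball_hull|].
Qed.

Lemma ball_hull_min K A : admissible d A -> K `<=` A -> ball_hull K `<=` A.
Proof. by move=> /admissibleP hA /ball_hullS KA; exact: subset_trans KA hA. Qed.

Lemma admissible_ball_hull K : admissible d (ball_hull K).
Proof.
apply/admissibleP => y hy c r r0 Kc.
by apply: hy => // z; apply.
Qed.

Lemma admissible_cball c r : 0 <= r -> admissible d (cball d c r).
Proof. by move=> r0; apply/admissibleP => y; apply. Qed.

Lemma admissible_bigcap (I : Type) (D : set I) (F : I -> set M) :
  (forall i, D i -> admissible d (F i)) -> admissible d (\bigcap_(i in D) F i).
Proof.
move=> Fadm; apply/admissibleP => y hy i Di.
have /admissibleP hF := Fadm i Di.
by apply: hF; apply: ball_hullS hy; exact: bigcap_inf.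
Qed.

Lemma admissibleI A B : admissible d A -> admissible d B -> admissible d (A `&` B).
Proof.
move=> /admissibleP hA /admissibleP hB; apply/admissibleP => y hy.
by split; [apply: hA|apply: hB]; apply: ball_hullS hy => z [].
Qed.

Lemma hyperconvex_on_neq0 (A : set M) : hyperconvex_on d A -> A !=set0.
Proof.
move=> Ahc; have [z Az _] := @Ahc Empty_set (fun e => match e with end)
  (fun e => match e with end) (fun e => match e with end) (fun e => match e with end).
by exists z.
Qed.

Hypothesis dhc : hyperconvex d.

Lemma hyperconvex_set (Q : set (M * R)) :
    (forall p q, Q p -> Q q -> d p.1 q.1 <= p.2 + q.2) ->
  exists z, forall p, Q p -> d p.1 z <= p.2.
Proof.
move=> HQ.
have [z _ Hz] := @dhc {p | Q p} (fun p => (sval p).1) (fun p => (sval p).2)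
  (fun _ => I) (fun p q => HQ _ _ (svalP p) (svalP q)).
by exists z => p Qp; exact: (Hz (exist _ p Qp)).
Qed.

Lemma bigcap_chain_neq0 (F : set (set M)) :
    (forall K, F K -> K !=set0 /\ admissible d K) -> total_on F subset ->
  \bigcap_(K in F) K !=set0.
Proof.
move=> Fadm Ftot.
pose Q (p : M * R) := 0 <= p.2 /\ exists2 K, F K & K `<=` cball d p.1 p.2.
have [|z Hz] := @hyperconvex_set Q.
  move=> [c r] [c' r'] [_ [X FX Xc]] [_ [Y FY Yc']] /=.
  have [XY|YX] := Ftot X Y FX FY.
    have [[x Xx] _] := Fadm X FX.
    exact: (cball_common_le (Xc _ Xx) (Yc' _ (XY _ Xx))).
  have [[y Yy] _] := Fadm Y FY.
  exact: (cball_common_le (Xc _ (YX _ Yy)) (Yc' _ Yy)).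
exists z => K FK; have [_ /admissibleP hK] := Fadm K FK.
by apply: hK => c r r0 Kc; apply: (Hz (c, r)); split=> //; exists K.
Qed.

Lemma admissible_center (K : set M) k0 rho : admissible d K -> K k0 ->
    (forall x y, K x -> K y -> d x y <= rho + rho) ->
  exists2 z, K z & forall y, K y -> d y z <= rho.
Proof.
move=> /admissibleP hK Kk0 Kdiam.
have rho0 : 0 <= rho by have := Kdiam _ _ Kk0 Kk0; rewrite dist0; lra.
pose Q (p : M * R) := (0 <= p.2 /\ K `<=` cball d p.1 p.2) \/ (K p.1 /\ p.2 = rho).
have [|z Hz] := @hyperconvex_set Q.
  move=> [c r] [c' r']; rewrite /Q /=.
  case=> [[r0 Kc]|[Kc ->]] [[r0' Kc']|[Kc' ->]].
  - exact: (cball_common_le (Kc _ Kk0) (Kc' _ Kk0)).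
  - by apply: le_trans (Kc _ Kc') _; rewrite lerDl.
  - by rewrite distC; apply: le_trans (Kc' _ Kc) _; rewrite lerDr.
  - exact: Kdiam.
exists z; last by move=> y Ky; apply: (Hz (y, rho)); right.
by apply: hK => c r r0 Kc; apply: (Hz (c, r)); left.
Qed.

Variable T : M -> M.

Definition invariant_admissible (K : set M) : Prop :=
  [/\ K !=set0, admissible d K & T @` K `<=` K].

Lemma minimal_invariant_admissible A0 : invariant_admissible A0 ->
  exists K, [/\ K `<=` A0, invariant_admissible K &
    forall K', invariant_admissible K' -> K' `<=` K -> K `<=` K'].
Proof.
move=> A0inv; apply: Zorn_bigcap => // F FP _ Ftot; split.
- by apply: bigcap_chain_neq0 => // K /FP [].
- by apply: admissible_bigcap => K /FP [].
- move=> _ [y Fy <-] K FK; have [_ _ KT] := FP K FK.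
  by apply: KT; exists y => //; exact: Fy.
Qed.

Hypothesis Tdim : diminishes_radius d T.

Section MinimalInvariantSet.
Variable K : set M.
Hypotheses (Kinv : invariant_admissible K)
  (Kmin : forall K', invariant_admissible K' -> K' `<=` K -> K `<=` K').

Lemma ball_hull_image_minimal : ball_hull (T @` K) = K.
Proof.
have [[k Kk] Kadm KT] := Kinv.
apply/seteqP; split; first exact: ball_hull_min.
apply: Kmin; last exact: ball_hull_min.
split; first by exists (T k); apply: sub_ball_hull; exists k.
  exact: admissible_ball_hull.
move=> _ [y hy <-]; apply: sub_ball_hull; exists y => //.
exact: ball_hull_min Kadm KT _ hy.
Qed.

Lemma minimal_half_diam x y : K x -> K y -> d x y <= diam K / 2.
Proof.
have [[k Kk] Kadm KT] := Kinv.
pose C := K `&` \bigcap_(y in K) cball d y (diam K / 2).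
have diam0 : 0 <= diam K / 2.
  by rewrite divr_ge0 // -(dist0 k); exact: dist_le_diam.
suff KC : K `<=` C by move=> Kx /KC [_ Cy]; exact: Cy.
apply: Kmin => [|z []//]; split.
- have [|z Kz Hz] := @admissible_center K k (diam K / 2) Kadm Kk.
    by move=> u v Ku Kv; rewrite -splitr; exact: dist_le_diam.
  by exists z; split=> // u Ku; exact: Hz.
- by apply: admissibleI => //; apply: admissible_bigcap => u _; exact: admissible_cball.
(* [C] is invariant: [K] is the ball hull of [T @` K], and the radius of
   [T @` K] about [T u] is at most that of [K] about [u]. *)
- move=> _ [u [Ku Cu] <-]; split; first by apply: KT; exists u.
  move=> v Kv; rewrite /cball /= distC.
  have hullv : ball_hull (T @` K) v by rewrite ball_hull_image_minimal.
  apply: hullv => // _ [w Kw <-]; apply: le_trans (dist_le_rad _ (imageP _ Kw)) _.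
  apply: le_trans (Tdim Kadm KT u) _; apply: rad_le; first by exists k.
  by move=> w' Kw'; rewrite distC; exact: Cu.
Qed.

Lemma minimal_fixed k : K k -> T k = k.
Proof.
have [Kn0 _ KT] := Kinv; move=> Kk.
have Tk : K (T k) by apply: KT; exists k.
have diam_half : diam K <= diam K / 2 by apply: diam_le => // x y; exact: minimal_half_diam.
case: dm => _ dE _ _; apply/dE/eqP; rewrite eq_le dist_ge0 andbT.
by apply: le_trans (dist_le_diam Tk Kk) _; lra.
Qed.

End MinimalInvariantSet.

Lemma fixed_point_in A0 : invariant_admissible A0 -> exists2 z, A0 z & T z = z.
Proof.
move=> /minimal_invariant_admissible [K [KA0 Kinv Kmin]].
have [[k Kk] _ _] := Kinv.
exists k; first exact: KA0.
exact: minimal_fixed Kinv Kmin k Kk.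
Qed.

Lemma dist_fixed_image_le p y : T p = p -> d p (T y) <= d p y.
Proof.
move=> Tp.
have pinv : T @` cball d p 0 `<=` cball d p 0.
  by rewrite cball0 image_set1 Tp.
have := Tdim (admissible_cball p (lexx 0)) pinv y.
by rewrite cball0 image_set1 Tp !rad_set1 (distC p) (distC p).
Qed.

Lemma hyperconvex_fixed_points : hyperconvex_on d (fixed_points T).
Proof.
move=> J x r Fx dxr.
pose D := \bigcap_(i in [set: J]) cball d (x i) (r i).
have r0 i : 0 <= r i by have := dxr i i; rewrite dist0; lra.
have [|z Dz Tz] := @fixed_point_in D; last by exists z => // i; exact: Dz.
split.
- by have [z _ Hz] := dhc (fun _ => I) dxr; exists z => i _; exact: Hz.
- by apply: admissible_bigcap => i _; exact: admissible_cball.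
- move=> _ [y Dy <-] i _; apply: le_trans (Dy i I).
  exact: dist_fixed_image_le (Fx i).
Qed.

End HyperconvexSpace.

Theorem theorem2p1 (R : realType) (M : Type) (d : M -> M -> R) (T : M -> M) :
  is_metric d -> bounded_space d -> hyperconvex d ->
  diminishes_radius d T ->
  (exists x : M, T x = x) /\ hyperconvex_on d (fixed_points T).
Proof.
move=> dm dbounded dhc Tdim.
have Fhc := hyperconvex_fixed_points dm dbounded dhc Tdim.
by split=> //; exact: hyperconvex_on_neq0 Fhc.
Qed.
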